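(* Let $f:X\to Y$ be a continuous surjection between topological spaces and let $\mathcal B$ be a $\pi$-base for $Y$ (consisting of non-empty open sets). Then the family $\{f^{-1}(V):V\in\mathcal B\}$ is a skeletal family if and only if $f$ is a skeletal map.
   Context: A continuous surjection $f:X\to Y$ is skeletal if for every non-empty open $U\subseteq X$ the closure of $f[U]$ has non-empty interior. A family $\mathcal P$ of open subsets of $X$ is a skeletal family if for every non-empty open $V\subseteq X$ there exists $W\in\mathcal P$ such that every non-empty $U\in\mathcal P$ with $U\subseteq W$ satisfies $U\cap V\neq\emptyset$. *)

From mathcomp Require Import all_boot all_order.
From mathcomp Require Import all_classical topology.
Set Implicit Arguments.
Unset Strict Implicit.
Unset Printing Implicit Defensive.
Local Open Scope classical_set_scope.

Definition pi_base {Y : topologicalType} (B : set (set Y)) : Prop :=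
  (forall V, B V -> open V /\ V !=set0) /\
  (forall U, open U -> U !=set0 -> exists2 V, B V & V `<=` U).

Definition skeletal_map {X Y : topologicalType} (f : X -> Y) : Prop :=
  forall U : set X, open U -> U !=set0 -> (interior (closure (f @` U))) !=set0.

Definition skeletal_family {X : topologicalType} (P : set (set X)) : Prop :=
  (forall U, P U -> open U) /\
  forall V : set X, open V -> V !=set0 ->
    exists2 W, P W &
      forall U, P U -> U !=set0 -> U `<=` W -> U `&` V !=set0.

From mathcomp Require Import all_boot all_order.
From mathcomp Require Import all_classical topology.
Local Open Scope classical_set_scope.

(* By surjectivity, inclusion and non-emptiness of sets in Y can be read off
   their preimages, so the preimages of B form a skeletal family iff for every
   non-empty open U some W in B has every member of B below it meeting f[U].
   As B is a pi-base, that says exactly W `<=` closure (f[U]), and a member of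
   B inside closure (f[U]) is the same as a non-empty interior. *)

Section SurjectivePreimage.
Context {aT rT : Type} {f : aT -> rT} (fsurj : set_surj setT setT f).

Lemma surj_preimage_subset (V W : set rT) :
  f @^-1` V `<=` f @^-1` W -> V `<=` W.
Proof.
have fT : f @` setT = setT by apply: surj_image_eq.
move=> /(image_subset f); rewrite !image_preimage //.
Qed.

Lemma surj_preimage_neq0 (V : set rT) : V !=set0 -> f @^-1` V !=set0.
Proof.
by case=> y Vy; have [x _ fxy] := fsurj y I; exists x; rewrite /preimage/= fxy.
Qed.

End SurjectivePreimage.

Lemma setI_image_neq0 {aT rT : Type} (f : aT -> rT) (U : set aT) (V : set rT) :
  V `&` f @` U !=set0 <-> f @^-1` V `&` U !=set0.
Proof.
split; first by case=> y [Vy [x Ux fxy]]; exists x; rewrite /preimage/= fxy.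
by case=> x [Vfx Ux]; exists (f x); split; [|exists x].
Qed.

Section ClosurePiBase.
Context {T : topologicalType}.

Lemma open_subset_closure_setI_neq0 (A V : set T) :
  open V -> V !=set0 -> V `<=` closure A -> V `&` A !=set0.
Proof.
move=> oV [y Vy] /(_ y Vy) /(_ V); rewrite setIC.
by apply; apply: open_nbhs_nbhs.
Qed.

Context {B : set (set T)} (hB : pi_base B).

Lemma pi_base_subset_closure (A W : set T) : open W ->
  (forall V, B V -> V `<=` W -> V `&` A !=set0) -> W `<=` closure A.
Proof.
move=> oW meetA y Wy N; rewrite nbhsE => -[O [oO Oy] ON].
have [V BV VWO] := hB.2 (W `&` O) (openI oW oO) (ex_intro _ y (conj Wy Oy)).
have [z [Vz Az]] := meetA V BV (fun x Vx => (VWO x Vx).1).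
by exists z; split; [|apply: ON; exact: (VWO z Vz).2].
Qed.

Lemma pi_base_interior_neq0 (A : set T) :
  A° !=set0 <-> exists2 W, B W & W `<=` A.
Proof.
split.
  move=> neA; have [W BW WA] := hB.2 _ (@open_interior _ A) neA.
  by exists W => // x /WA /interior_subset.
case=> W BW WA; have [oW neW] := hB.1 W BW.
by case: neW => y Wy; exists y; move: WA; rewrite open_subsetE //; apply.
Qed.

End ClosurePiBase.

Theorem proposition2 (X Y : topologicalType) (f : X -> Y)
  (fcont : continuous f) (fsurj : set_surj setT setT f)
  (B : set (set Y)) (hB : pi_base B) :
  skeletal_family [set f @^-1` V | V in B] <-> skeletal_map f.
Proof.
split.
- move=> [_ skelP] U oU neU; apply/(pi_base_interior_neq0 hB).
  have [_ [W BW <-] belowW] := skelP U oU neU.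
  exists W => //; apply: (pi_base_subset_closure hB) => [|V BV VW].
    by case: (hB.1 W BW).
  apply/setI_image_neq0; apply: belowW; first by exists V.
    by apply: surj_preimage_neq0 => //; case: (hB.1 V BV).
  exact: preimage_subset.
- move=> skelf; split=> [_ [V BV <-]|U oU neU].
    by move/continuousP: fcont; apply; case: (hB.1 V BV).
  have [W BW Wcl] := (pi_base_interior_neq0 hB _).1 (skelf U oU neU).
  exists (f @^-1` W) => [|_ [V BV <-] _ /(surj_preimage_subset fsurj) VW].
    by exists W.
  have [oV neV] := hB.1 V BV.
  apply/setI_image_neq0; apply: open_subset_closure_setI_neq0 => //.
  by move=> y /VW /Wcl.
Qed.
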